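(* Let $G$ be a finite group and $H$ a finite abelian group. Then $A_{G\times H}(t)=A_G(|H|t)$ and $B_{G\times H}(t)=B_G(|H|t)$.
   Context: For a finite group $G$ and $n\ge 0$, $G$ acts on $G^n$ by simultaneous conjugation. Let $G^{(n)}\subseteq G^n$ be the set of $n$-tuples of pairwise commuting elements. Let $\alpha_{G,n}$ (resp. $\beta_{G,n}$) be the number of $G$-orbits on $G^n$ (resp. on $G^{(n)}$), and set $A_G(t)=\sum_{n\ge0}\alpha_{G,n}t^n$, $B_G(t)=\sum_{n\ge0}\beta_{G,n}t^n$. *)

From mathcomp Require Import all_boot all_fingroup all_solvable.
Set Implicit Arguments. Unset Strict Implicit. Unset Printing Implicit Defensive.
Local Open Scope group_scope.

Definition tuples (gT : finGroupType) (G : {set gT}) (n : nat)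
  : {set {ffun 'I_n -> gT}} :=
  [set t : {ffun 'I_n -> gT} | [forall i, t i \in G]].

Definition ctuples (gT : finGroupType) (G : {set gT}) (n : nat)
  : {set {ffun 'I_n -> gT}} :=
  [set t in tuples G n | [forall i, forall j, t i * t j == t j * t i]].

Definition tconj (gT : finGroupType) (n : nat) (t : {ffun 'I_n -> gT}) (g : gT)
  : {ffun 'I_n -> gT} := [ffun i => t i ^ g].

Definition torbit (gT : finGroupType) (G : {set gT}) (n : nat)
  (t : {ffun 'I_n -> gT}) : {set {ffun 'I_n -> gT}} :=
  [set tconj t g | g in G].

Definition norbits (gT : finGroupType) (G : {set gT}) (n : nat)
  (X : {set {ffun 'I_n -> gT}}) : nat :=
  #|[set torbit G t | t in X]|.

Definition alpha (gT : finGroupType) (G : {set gT}) (n : nat) : nat :=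
  norbits G (tuples G n).
Definition beta (gT : finGroupType) (G : {set gT}) (n : nat) : nat :=
  norbits G (ctuples G n).

From mathcomp Require Import all_boot all_fingroup all_solvable.
Local Open Scope group_scope.

(* An n-tuple over G x H is a pair of an n-tuple over G and an n-tuple over H.
   Conjugating by (g, h) acts on the H-component by h, which is trivial when H
   is abelian, so the (G x H)-orbit of (s, u) is the G-orbit of s with u fixed.
   Hence the orbits on pairs are the pairs (G-orbit, H-tuple): there are
   |H|^n times as many.  Commutation in G x H is componentwise and automatic
   in H, so the same holds for commuting tuples. *)

Section TuplePairs.

Variables (gT hT : finGroupType) (n : nat).

Definition tpair (s : {ffun 'I_n -> gT}) (u : {ffun 'I_n -> hT})
  : {ffun 'I_n -> gT * hT} := [ffun i => (s i, u i)].

Definition tpairs (X : {set {ffun 'I_n -> gT}}) (U : {set {ffun 'I_n -> hT}})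
  : {set {ffun 'I_n -> gT * hT}} := [set tpair s u | s in X, u in U].

Lemma tpair_inj s u s' u' : tpair s u = tpair s' u' -> s = s' /\ u = u'.
Proof.
move=> eq_su; split; apply/ffunP=> i;
  have := congr1 (fun t : {ffun 'I_n -> gT * hT} => t i) eq_su;
  by rewrite !ffunE => -[].
Qed.

Lemma tpair_split (t : {ffun 'I_n -> gT * hT}) :
  t = tpair [ffun i => (t i).1] [ffun i => (t i).2].
Proof. by apply/ffunP=> i; rewrite !ffunE; case: (t i). Qed.

Lemma mem_tpairs X U s u : (tpair s u \in tpairs X U) = (s \in X) && (u \in U).
Proof.
apply/imset2P/andP => [[s' u' s'X u'U /tpair_inj[-> ->]] // | [sX uU]].
by exists s u.
Qed.

Lemma mem_tuples_setX (G : {set gT}) (H : {set hT}) s u :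
  (tpair s u \in tuples (setX G H) n) = (s \in tuples G n) && (u \in tuples H n).
Proof.
rewrite !inE; apply/forallP/andP => [tGH | [/forallP sG /forallP uH] i].
  by split; apply/forallP=> i; have := tGH i; rewrite ffunE inE => /andP[].
by rewrite ffunE inE sG uH.
Qed.

Lemma tuples_setX (G : {set gT}) (H : {set hT}) :
  tuples (setX G H) n = tpairs (tuples G n) (tuples H n).
Proof.
by apply/setP=> t; rewrite (tpair_split t) mem_tpairs mem_tuples_setX.
Qed.

Lemma ctuples_setX (G : {set gT}) (H : {set hT}) : abelian H ->
  ctuples (setX G H) n = tpairs (ctuples G n) (tuples H n).
Proof.
move=> abH; apply/setP=> t; rewrite (tpair_split t) mem_tpairs.
set s := [ffun i => _]; set u := [ffun i => _].
rewrite [LHS]inE [s \in _]inE mem_tuples_setX.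
case uH: (u \in tuples H n); last by rewrite !andbF.
rewrite !andbT; congr (_ && _).
move: uH; rewrite inE => /forallP uH.
apply: eq_forallb => i; apply: eq_forallb => j.
have := centsP abH _ (uH i) _ (uH j); rewrite !ffunE => uC.
by rewrite -pair_eqE /= uC eqxx andbT.
Qed.

Lemma tconj_tpair s u g h :
  tconj (tpair s u) (g, h) = tpair (tconj s g) (tconj u h).
Proof. by apply/ffunP=> i; rewrite !ffunE. Qed.

Lemma tconj_centralized (u : {ffun 'I_n -> hT}) h :
  (forall i, commute (u i) h) -> tconj u h = u.
Proof. by move=> uC; apply/ffunP=> i; rewrite ffunE /conjg uC mulKg. Qed.

Lemma torbit_id (G : {group gT}) (s : {ffun 'I_n -> gT}) : s \in torbit G s.
Proof. by apply/imsetP; exists 1 => //; apply/ffunP=> i; rewrite ffunE conjg1. Qed.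

Lemma torbit_tpair (G : {set gT}) (H : {group hT}) s u :
  abelian H -> u \in tuples H n ->
  torbit (setX G H) (tpair s u) = [set tpair s' u | s' in torbit G s].
Proof.
rewrite inE => abH /forallP uH.
have tconj_u h : h \in H -> tconj u h = u.
  by move=> hH; apply: tconj_centralized => i; apply: (centsP abH).
apply/setP=> t; apply/imsetP/imsetP.
  case=> -[g h]; rewrite inE => /andP[/= gG hH] ->.
  by exists (tconj s g); [apply: imset_f | rewrite tconj_tpair tconj_u].
case=> _ /imsetP[g gG ->] ->.
exists (g, 1); first by rewrite inE gG group1.
by rewrite tconj_tpair tconj_u.
Qed.

Lemma card_tuples (H : {set hT}) : #|tuples H n| = (#|H| ^ n)%N.
Proof.
have -> : tuples H n = [set t in ffun_on (mem H)].
  by apply/setP=> t; rewrite !inE; apply/forallP/ffun_onP.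
by rewrite cardsE card_ffun_on card_ord.
Qed.

Lemma norbits_tpairs (G : {group gT}) (H : {group hT})
    (X : {set {ffun 'I_n -> gT}}) : abelian H ->
  norbits (setX G H) (tpairs X (tuples H n)) = (#|H| ^ n * norbits G X)%N.
Proof.
move=> abH.
pose orbit_with (O : {set {ffun 'I_n -> gT}}) u := [set tpair s u | s in O].
have orbitsE : [set torbit (setX G H) t | t in tpairs X (tuples H n)]
    = [set orbit_with O u | O in [set torbit G s | s in X], u in tuples H n].
  apply/setP=> O; apply/imsetP/imset2P.
    case=> _ /imset2P[s u sX uH ->] ->.
    by exists (torbit G s) u; rewrite ?imset_f ?torbit_tpair.
  case=> _ u /imsetP[s sX ->] uH ->.
  by exists (tpair s u); rewrite ?imset2_f ?torbit_tpair.
rewrite /norbits orbitsE curry_imset2X card_in_imset; last first.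
  move=> [O1 u1] [O2 u2]; rewrite !inE /=.
  case/andP=> /imsetP[s1 _ ->] _ /andP[/imsetP[s2 _ ->] _] eqO.
  have : tpair s1 u1 \in orbit_with (torbit G s2) u2.
    by rewrite -eqO; apply: imset_f; apply: torbit_id.
  case/imsetP=> _ _ /tpair_inj[_ eq_u]; subst u2; congr pair.
  by apply: (imset_inj (f := tpair^~ u1)) eqO => a b /tpair_inj[].
by rewrite cardsX mulnC card_tuples.
Qed.

End TuplePairs.

Theorem corollary4p6 (gT hT : finGroupType) (G : {group gT}) (H : {group hT}) :
  abelian H ->
  (forall n : nat, alpha (setX G H) n = (#|H| ^ n * alpha G n)%N) /\
  (forall n : nat, beta (setX G H) n = (#|H| ^ n * beta G n)%N).
Proof.
move=> abH; split=> n.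
  by rewrite /alpha tuples_setX norbits_tpairs.
by rewrite /beta ctuples_setX // norbits_tpairs.
Qed.
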